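(* Let $A$ and $B$ be automata with $A\le_{*T}B$. Then there exists an automaton $C$ such that $A\le_H C$ and $C\le_B B$.
   Context: An automaton $A$ consists of a set $\mathrm{states}(A)$ of states, a nonempty set $\mathrm{start}(A)\subseteq\mathrm{states}(A)$ of start states, a set $\mathrm{acts}(A)$ of actions containing a distinguished internal action $\tau$, and a set $\mathrm{steps}(A)\subseteq\mathrm{states}(A)\times\mathrm{acts}(A)\times\mathrm{states}(A)$ of steps; write $s\xrightarrow{a}_A t$ for $(s,a,t)\in\mathrm{steps}(A)$. An execution fragment of $A$ is a finite or infinite alternating sequence $s_0a_1s_1a_2s_2\cdots$ of states and actions, beginning with a state and, if finite, ending with a state, such that $s_{i-1}\xrightarrow{a_i}_A s_i$ for all $i>0$. An execution is an execution fragment whose first state is a start state. The trace of an execution fragment is the subsequence of its non-$\tau$ actions; a trace of $A$ is the trace of some execution of $A$, and $\mathrm{traces}^*(A)$ is the set of finite traces of $A$. $A\le_{*T}B$ means $\mathrm{traces}^*(A)\subseteq\mathrm{traces}^*(B)$. For a relation $R$ write $R[s]=\{u\mid (s,u)\in R\}$. A step refinement from $A$ to $B$ is a partial function $r:\mathrm{states}(A)\rightharpoonup\mathrm{states}(B)$ such that (1) if $s\in\mathrm{start}(A)$ then $s\in\mathrm{dom}(r)$ and $r(s)\in\mathrm{start}(B)$; (2) if $s\xrightarrow{a}_A t$ and $s\in\mathrm{dom}(r)$ then $t\in\mathrm{dom}(r)$ and either $r(s)=r(t)$ and $a=\tau$, or $r(s)\xrightarrow{a}_B r(t)$. A normed forward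 simulation from $A$ to $B$ is a pair $(f,n)$ where $f\subseteq\mathrm{states}(A)\times\mathrm{states}(B)$ and $n:\mathrm{steps}(A)\times\mathrm{states}(B)\to S$ for some set $S$ with a well-founded strict order $<$, such that: (1) if $s\in\mathrm{start}(A)$ then $f[s]\cap\mathrm{start}(B)\neq\emptyset$; (2) if $s\xrightarrow{a}_A t$ and $u\in f[s]$ then (a) $u\in f[t]$ and $a=\tau$, or (b) there is $v\in f[t]$ with $u\xrightarrow{a}_B v$, or (c) there is $v\in f[s]$ with $u\xrightarrow{\tau}_B v$ and $n(s\xrightarrow{a}t,v)<n(s\xrightarrow{a}t,u)$. A normed backward simulation from $A$ to $B$ is a pair $(b,n)$ where $b\subseteq\mathrm{states}(A)\times\mathrm{states}(B)$ is total (every $s\in\mathrm{states}(A)$ has $b[s]\neq\emptyset$) and $n:(\mathrm{steps}(A)\cup\mathrm{start}(A))\times\mathrm{states}(B)\to S$ for some set $S$ with a well-founded strict order $<$, such that: (1) if $s\in\mathrm{start}(A)$ and $u\in b[s]$ then (a) $u\in\mathrm{start}(B)$, or (b) there is $v\in b[s]$ with $v\xrightarrow{\tau}_B u$ and $n(s,v)<n(s,u)$; (2) if $t\xrightarrow{a}_A s$ and $u\in b[s]$ then (a) $u\in b[t]$ and $a=\tau$, or (b) there is $v\in b[t]$ with $v\xrightarrow{a}_B u$, or (c) there is $v\in b[s]$ with $v\xrightarrow{\tau}_B u$ and $n(t\xrightarrow{a}s,v)<n(t\xrightarrow{a}s,u)$. Write $A\le_B B$ if a normed backward simulation from $A$ to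 $B$ exists. A normed history relation from $A$ to $B$ is a pair $(r,n)$ such that $r$ is a step refinement from $B$ to $A$ and $(r^{-1},n)$ is a normed forward simulation from $A$ to $B$. Write $A\le_H B$ if one exists. *)

From Stdlib Require Import List Relations Wellfounded.
Import ListNotations.
Set Implicit Arguments.

Section Auto.
Variables (Act : Type) (tau : Act).

Record automaton := {
  state : Type;
  start : state -> Prop;
  acts : Act -> Prop;
  step : state -> Act -> state -> Prop;
  start_nonempty : exists s, start s;
  tau_in_acts : acts tau;
  step_acts : forall s a t, step s a t -> acts a
}.

(* [frag A s tr t]: there is a finite execution fragment of A from s to t
   whose trace (subsequence of non-tau actions) is tr. *)
Inductive frag (A : automaton) : state A -> list Act -> state A -> Prop :=
| frag_nil : forall s, frag A s [] s
| frag_tau : forall s t u tr, step A s tau t -> frag A t tr u -> frag A s tr u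
| frag_vis : forall s a t u tr, a <> tau -> step A s a t -> frag A t tr u ->
    frag A s (a :: tr) u.

Definition ftraces (A : automaton) (tr : list Act) : Prop :=
  exists s t, start A s /\ frag A s tr t.

Definition trace_incl (A B : automaton) : Prop :=
  forall tr, ftraces A tr -> ftraces B tr.

Definition wf_strict_order (S : Type) (lt : S -> S -> Prop) : Prop :=
  well_founded lt /\ (forall x, ~ lt x x) /\ transitive S lt.

Definition step_refinement (A B : automaton) (r : state A -> option (state B)) : Prop :=
  (forall s, start A s -> exists u, r s = Some u /\ start B u) /\
  (forall s a t u, step A s a t -> r s = Some u ->
     exists v, r t = Some v /\ ((u = v /\ a = tau) \/ step B u a v)).

Definition normed_forward_sim (A B : automaton) (f : state A -> state B -> Prop)
  (S : Type) (lt : S -> S -> Prop)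
  (n : (state A * Act * state A) -> state B -> S) : Prop :=
  wf_strict_order lt /\
  (forall s, start A s -> exists u, f s u /\ start B u) /\
  (forall s a t u, step A s a t -> f s u ->
     (f t u /\ a = tau) \/
     (exists v, f t v /\ step B u a v) \/
     (exists v, f s v /\ step B u tau v /\ lt (n (s, a, t) v) (n (s, a, t) u))).

(* Normed backward simulation (b, n) from A to B; the norm is defined on
   (steps(A) + start(A)) x states(B), encoded by a sum type. *)
Definition normed_backward_sim (A B : automaton) (b : state A -> state B -> Prop)
  (S : Type) (lt : S -> S -> Prop)
  (n : ((state A * Act * state A) + state A) -> state B -> S) : Prop :=
  wf_strict_order lt /\
  (forall s, exists u, b s u) /\
  (forall s u, start A s -> b s u ->
     start B u \/
     (exists v, b s v /\ step B v tau u /\ lt (n (inr s) v) (n (inr s) u))) /\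
  (forall t a s u, step A t a s -> b s u ->
     (b t u /\ a = tau) \/
     (exists v, b t v /\ step B v a u) \/
     (exists v, b s v /\ step B v tau u /\
        lt (n (inl (t, a, s)) v) (n (inl (t, a, s)) u))).

Definition backward_le (A B : automaton) : Prop :=
  exists (b : state A -> state B -> Prop) (S : Type) (lt : S -> S -> Prop) n,
    normed_backward_sim A B b lt n.

Definition history_le (A B : automaton) : Prop :=
  exists (r : state B -> option (state A)) (S : Type) (lt : S -> S -> Prop) n,
    step_refinement B A r /\
    normed_forward_sim A B (fun s u => r u = Some s) lt n.

End Auto.

(* Let C be the automaton whose states are pairs (s, tr) of a state of A and
   a trace tr with which s is reachable; C moves like A and records visible
   actions.  Forgetting the trace is a step refinement from C to A whose
   inverse is a forward simulation, so A <=_H C.  Relating (s, tr) to the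
   states of B reachable with trace tr is total by trace inclusion, and every
   step of C ending in trace tr can be matched backwards in B: walk back along
   a shortest tail of internal steps, and when none is left take the final
   visible step (or reach a start state).  The length of that shortest tail
   is the norm. *)
From Stdlib Require Import List Classical Lia Arith Wf_nat.
Import ListNotations.
Set Implicit Arguments.
Unset Strict Implicit.

Section Fragments.
Variables (Act : Type) (tau : Act) (A : automaton tau).

Lemma frag_app x tr1 y tr2 z :
  frag A x tr1 y -> frag A y tr2 z -> frag A x (tr1 ++ tr2) z.
Proof.
  induction 1; intros Hz; simpl.
  - exact Hz.
  - eapply frag_tau; eauto.
  - eapply frag_vis; eauto.
Qed.

Lemma frag_snoc_tau x tr y z :
  frag A x tr y -> step A y tau z -> frag A x tr z.
Proof.
  intros Hxy Hyz. rewrite <- (app_nil_r tr).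
  eapply frag_app; [exact Hxy | eapply frag_tau; [exact Hyz | constructor]].
Qed.

Lemma frag_snoc_vis x tr y a z :
  frag A x tr y -> a <> tau -> step A y a z -> frag A x (tr ++ [a]) z.
Proof.
  intros Hxy Ha Hyz.
  eapply frag_app; [exact Hxy | eapply frag_vis; [exact Ha | exact Hyz | constructor]].
Qed.

Fixpoint taus (k : nat) (x y : state A) : Prop :=
  match k with
  | 0 => x = y
  | S k => exists v, taus k x v /\ step A v tau y
  end.

Lemma frag_taus x tr y k z :
  frag A x tr y -> taus k y z -> frag A x tr z.
Proof.
  revert z; induction k as [|k IH]; simpl; intros z Hxy Hyz.
  - subst; exact Hxy.
  - destruct Hyz as [v [Hyv Hvz]]. exact (frag_snoc_tau (IH v Hxy Hyv) Hvz).
Qed.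

Lemma taus_cons k x v y :
  step A x tau v -> taus k v y -> taus (S k) x y.
Proof.
  revert y; induction k as [|k IH]; simpl; intros y Hxv Hvy.
  - subst. exists x. auto.
  - destruct Hvy as [w [Hvw Hwy]]. exists w. split; [exact (IH w Hxv Hvw) | exact Hwy].
Qed.

Lemma frag_nil_taus x y : frag A x [] y -> exists k, taus k x y.
Proof.
  remember [] as tr eqn:E. induction 1.
  - exists 0. reflexivity.
  - destruct (IHfrag E) as [k Hk]. exists (S k). eapply taus_cons; eauto.
  - discriminate.
Qed.

Lemma frag_snoc_inv x tr a y :
  frag A x (tr ++ [a]) y -> a <> tau ->
  exists w1 w2 k, frag A x tr w1 /\ step A w1 a w2 /\ taus k w2 y.
Proof.
  remember (tr ++ [a]) as tr' eqn:E. intros Hfrag Ha. revert tr E.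
  induction Hfrag as [s | s t u tr' Hst Htu IH | s b t u tr' Hb Hst Htu IH];
    intros tr E.
  - destruct tr; discriminate.
  - destruct (IH tr E) as [w1 [w2 [k [H1 [H2 H3]]]]].
    exists w1, w2, k. split; [eapply frag_tau; eauto | auto].
  - destruct tr as [|c tr]; simpl in E; injection E; intros E2 E1; subst.
    + destruct (frag_nil_taus Htu) as [k Hk].
      exists s, t, k. split; [constructor | auto].
    + destruct (IH tr eq_refl) as [w1 [w2 [k [H1 [H2 H3]]]]].
      exists w1, w2, k. split; [eapply frag_vis; eauto | auto].
Qed.

End Fragments.

(* Sets of naturals, compared by: some element of the first lies below all
   elements of the second.  A norm valued in such sets avoids having to
   choose a least element as the norm itself. *)
Definition set_lt (X Y : nat -> Prop) : Prop :=
  exists k, X k /\ forall j, Y j -> k < j.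

Lemma set_lt_wf_strict_order : wf_strict_order set_lt.
Proof.
  split; [|split].
  - assert (Hacc : forall m X, X m -> Acc set_lt X).
    { intro m. induction m as [m IH] using (well_founded_induction lt_wf).
      intros X HX. constructor. intros Y [k [Hk Hlt]].
      exact (IH k (Hlt m HX) Y Hk). }
    intro X. constructor. intros Y [k [Hk _]]. exact (Hacc k Y Hk).
  - intros X [k [Hk Hlt]]. specialize (Hlt k Hk). lia.
  - intros X Y Z [k [Hk H1]] [l [Hl H2]]. exists k. split; [exact Hk|].
    intros j Hj. specialize (H1 l Hl). specialize (H2 j Hj). lia.
Qed.

Section TauDistance.
Variables (Act : Type) (tau : Act) (B : automaton tau).

Definition tau_dist (Base : state B -> Prop) (u : state B) : nat -> Prop :=
  fun k => exists w, Base w /\ taus k w u.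

Lemma tau_dist_descent (Base : state B -> Prop) u :
  (exists k, tau_dist Base u k) ->
  Base u \/
  exists v, step B v tau u /\ (exists k, tau_dist Base v k) /\
            set_lt (tau_dist Base v) (tau_dist Base u).
Proof.
  intros Hne.
  destruct (dec_inh_nat_subset_has_unique_least_element _
              (fun n => classic (tau_dist Base u n)) Hne)
    as [k [[[w [Hw Hk]] Hleast] _]].
  destruct k as [|k]; simpl in Hk.
  - left. subst. exact Hw.
  - right. destruct Hk as [v [Hwv Hvu]].
    assert (Hv : tau_dist Base v k) by (exists w; auto).
    exists v. split; [exact Hvu | split; [exists k; exact Hv |]].
    exists k. split; [exact Hv|]. intros j Hj. specialize (Hleast j Hj). lia.
Qed.

End TauDistance.

Section TraceHistory.
Variables (Act : Type) (tau : Act) (A : automaton tau).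

Record hstate := HState {
  cur : state A;
  past : list Act;
  hstate_reachable : exists s0, start A s0 /\ frag A s0 past cur
}.

Definition extend_trace (a : Act) (tr tr' : list Act) : Prop :=
  (a = tau /\ tr' = tr) \/ (a <> tau /\ tr' = tr ++ [a]).

Definition hstart (p : hstate) : Prop := start A (cur p) /\ past p = [].

Definition hstep (p : hstate) (a : Act) (q : hstate) : Prop :=
  step A (cur p) a (cur q) /\ extend_trace a (past p) (past q).

Definition hinit (s : state A) (Hs : start A s) : hstate :=
  HState (ex_intro _ s (conj Hs (frag_nil A s))).

Lemma hstart_nonempty : exists p, hstart p.
Proof.
  destruct (start_nonempty A) as [s Hs]. exists (hinit Hs). split; auto.
Qed.

Lemma hstep_acts p a q : hstep p a q -> acts A a.
Proof. intros [Hstep _]. exact (step_acts A _ _ _ Hstep). Qed.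

Definition trace_history : automaton tau :=
  {| state := hstate; start := hstart; acts := acts A; step := hstep;
     start_nonempty := hstart_nonempty; tau_in_acts := tau_in_acts A;
     step_acts := hstep_acts |}.

Lemma hstep_lift p a t :
  step A (cur p) a t -> exists q, cur q = t /\ hstep p a q.
Proof.
  intros Hstep. destruct p as [s tr [s0 [Hs0 Hfrag]]]; simpl in *.
  destruct (classic (a = tau)) as [Ha | Ha].
  - subst a.
    exists (HState (ex_intro _ s0 (conj Hs0 (frag_snoc_tau Hfrag Hstep)))).
    split; [reflexivity | split; [exact Hstep | left; auto]].
  - exists (HState (ex_intro _ s0 (conj Hs0 (frag_snoc_vis Hfrag Ha Hstep)))).
    split; [reflexivity | split; [exact Hstep | right; auto]].
Qed.

Lemma history_le_trace_history : history_le A trace_history.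
Proof.
  exists (fun p : hstate => Some (cur p)), unit, (fun _ _ => False),
    (fun _ _ => tt).
  split; [split | split; [|split]].
  - intros p [Hs _]. exists (cur p). auto.
  - intros p a q s [Hstep _] E. injection E as <-.
    exists (cur q). split; [reflexivity | right; exact Hstep].
  - split; [|split].
    + intro x. constructor. intros y [].
    + intros x [].
    + intros x y z [].
  - intros s Hs. exists (hinit Hs). split; [reflexivity | split; [exact Hs | reflexivity]].
  - intros s a t p Hstep E. injection E as <-.
    right; left. destruct (hstep_lift Hstep) as [q [<- Hq]].
    exists q. auto.
Qed.

Variable B : automaton tau.
Hypothesis Hincl : trace_incl A B.

Definition reachB (tr : list Act) (u : state B) : Prop :=
  exists u0, start B u0 /\ frag B u0 tr u.

Definition after_vis (tr : list Act) (a : Act) (w : state B) : Prop :=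
  exists w1, reachB tr w1 /\ step B w1 a w.

Definition hnorm (x : (hstate * Act * hstate) + hstate) (u : state B) : nat -> Prop :=
  match x with
  | inl (p, a, _) => tau_dist (after_vis (past p) a) u
  | inr _ => tau_dist (start B) u
  end.

Lemma reachB_tau_dist Base tr u :
  (forall w, Base w -> reachB tr w) ->
  (exists k, tau_dist Base u k) -> reachB tr u.
Proof.
  intros Hbase [k [w [Hw Hk]]]. destruct (Hbase w Hw) as [u0 [Hu0 Hfrag]].
  exists u0. split; [exact Hu0 | exact (frag_taus Hfrag Hk)].
Qed.

Lemma backward_le_trace_history : backward_le trace_history B.
Proof.
  exists (fun (p : hstate) u => reachB (past p) u), (nat -> Prop), set_lt, hnorm.
  split; [exact set_lt_wf_strict_order | split; [|split]].
  - intros [s tr [s0 [Hs0 Hfrag]]]. simpl.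
    destruct (Hincl (ex_intro _ s0 (ex_intro _ s (conj Hs0 Hfrag))))
      as [u0 [u [Hu0 Hu]]].
    exists u, u0. auto.
  - intros p u [_ Hnil] [u0 [Hu0 Hfrag]]. simpl in *. rewrite Hnil in *.
    destruct (frag_nil_taus Hfrag) as [k Hk].
    destruct (tau_dist_descent (ex_intro _ k (ex_intro _ u0 (conj Hu0 Hk))))
      as [Hu | [v [Hvu [Hv Hlt]]]].
    + left. exact Hu.
    + right. exists v. split; [|split; [exact Hvu | exact Hlt]].
      apply (reachB_tau_dist (Base := start B)); [|exact Hv].
      intros w Hw. exists w. split; [exact Hw | constructor].
  - intros q a p u [_ [[Ha E] | [Ha E]]] Hu; simpl in *; rewrite E in Hu.
    + left. auto.
    + destruct Hu as [u0 [Hu0 Hfrag]].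
      destruct (frag_snoc_inv Hfrag Ha) as [w1 [w2 [k [H1 [H2 H3]]]]].
      assert (Hdist : exists k, tau_dist (after_vis (past q) a) u k)
        by (exists k, w2; split; [exists w1; split; [exists u0; auto | exact H2] | exact H3]).
      destruct (tau_dist_descent Hdist) as [[v [Hv Hvu]] | [v [Hvu [Hv Hlt]]]].
      * right; left. exists v. auto.
      * right; right. exists v. split; [|split; [exact Hvu | exact Hlt]].
        rewrite E. apply (reachB_tau_dist (Base := after_vis (past q) a)); [|exact Hv].
        intros w [w' [[x0 [Hx0 Hx]] Hw']]. exists x0.
        split; [exact Hx0 | exact (frag_snoc_vis Hx Ha Hw')].
Qed.

End TraceHistory.

Theorem mainTheorem3 (Act : Type) (tau : Act) (A B : automaton tau) :
  trace_incl A B ->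
  exists C : automaton tau, history_le A C /\ backward_le C B.
Proof.
  intros Hincl. exists (trace_history A). split.
  - exact (history_le_trace_history A).
  - exact (backward_le_trace_history Hincl).
Qed.
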